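(* Let $P$ be a poset and $v$ an assignment of variables to elements of $P$. Then for all $m,n\in\omega$, $P,v\models\phi_{mn}(x_1,\ldots,x_m,y)$ if and only if $\exists$ has an $n$-strategy for the game with starting position $(\{v(x_1),\ldots,v(x_m)\},\{v(y)\})$.
   Context: Work in the first-order signature with one binary relation $\leq$. Let $J(x,y,z)$ be the formula $x\leq z\wedge y\leq z\wedge\forall w((x\leq w\wedge y\leq w)\to z\leq w)$ (so $z$ is the join of $x,y$), and $M(x,y,z)$ the dual formula expressing that $z$ is the meet of $x,y$. For $k\in\omega$ let $C_k(x_1,\ldots,x_k,y)$ be $\bigvee_{i=1}^k(y=x_i)$ (false when $k=0$) and $D_k=\neg C_k$. Write $\vec{x}_m=(x_1,\ldots,x_m)$. Define formulas $\phi_{mn}(\vec{x}_m,y)$ recursively: $\phi_{m0}(\vec{x}_m,y)=D_m(\vec{x}_m,y)$, and $\phi_{m(n+1)}(\vec{x}_m,y)=\forall a\forall b\forall c\Big(\big(\exists d(C_m(\vec{x}_m,d)\wedge d\leq a)\to\phi_{(m+1)n}(\vec{x}_m,a,y)\big)\wedge\big((C_m(\vec{x}_m,a)\wedge C_m(\vec{x}_m,b)\wedge M(a,b,c))\to\phi_{(m+1)n}(\vec{x}_m,c,y)\big)\wedge\big((C_m(\vec{x}_m,c)\wedge J(a,b,c))\to(\phi_{(m+1)n}(\vec{x}_m,a,y)\vee\phi_{(m+1)n}(\vec{x}_m,b,y))\big)\Big)$. The game: for a poset $P$ and $U_0,V\subseteq P$, the game with starting position $(U_0,V)$ is played between $\forall$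 and $\exists$ in rounds $0,1,2,\ldots$; a set $U$ is maintained, initially $U_0$, with $V$ fixed. Each round $\forall$ moves and $\exists$ responds: (1) if $b\geq a$ for some $a\in U$, $\forall$ may play $(b)$ and $\exists$ must add $b$ to $U$; (2) if $a,b\in U$ and $a\wedge b$ exists, $\forall$ may play $(a,b)$ and $\exists$ must add $a\wedge b$ to $U$; (3) if $a\vee b$ exists and lies in $U$, $\forall$ may play $(a,b)$ and $\exists$ must choose one of $a,b$ and add it to $U$. $\forall$ wins in round $n$ if $U\cap V\neq\emptyset$ at the beginning of round $n$. $\exists$ has an $n$-strategy if she can guarantee that $\forall$ does not win until at least round $n+1$, however $\forall$ plays. *)

From mathcomp Require Import all_boot all_order.
Set Implicit Arguments. Unset Strict Implicit. Unset Printing Implicit Defensive.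
Import Order.Theory.
Local Open Scope order_scope.

Inductive form : Type :=
  | FLe : nat -> nat -> form
  | FEq : nat -> nat -> form
  | FFalse : form
  | FNot : form -> form
  | FAnd : form -> form -> form
  | FOr : form -> form -> form
  | FImp : form -> form -> form
  | FAll : nat -> form -> form
  | FEx : nat -> form -> form.

Definition upd {T : Type} (v : nat -> T) (x : nat) (a : T) : nat -> T :=
  fun z => if z == x then a else v z.

Fixpoint sat {d : Order.disp_t} {P : porderType d} (v : nat -> P) (f : form)
  : Prop :=
  match f with
  | FLe x y => v x <= v y
  | FEq x y => v x = v y
  | FFalse => False
  | FNot g => ~ sat v g
  | FAnd g h => sat v g /\ sat v h
  | FOr g h => sat v g \/ sat v h
  | FImp g h => sat v g -> sat v h
  | FAll x g => forall a : P, sat (upd v x a) g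
  | FEx x g => exists a : P, sat (upd v x a) g
  end.

Definition FJ (x y z w : nat) : form :=
  FAnd (FLe x z) (FAnd (FLe y z)
    (FAll w (FImp (FAnd (FLe x w) (FLe y w)) (FLe z w)))).

Definition FM (x y z w : nat) : form :=
  FAnd (FLe z x) (FAnd (FLe z y)
    (FAll w (FImp (FAnd (FLe w x) (FLe w y)) (FLe w z)))).

Fixpoint FC (xs : seq nat) (y : nat) : form :=
  match xs with
  | [::] => FFalse
  | [:: x] => FEq y x
  | x :: xs' => FOr (FEq y x) (FC xs' y)
  end.

Definition FD (xs : seq nat) (y : nat) : form := FNot (FC xs y).

(* phi_{mn}(xs, y) with m = size xs; the bound variables a,b,c,d,w are
   chosen fresh (larger than every variable among xs, y). *)
Fixpoint phi (n : nat) (xs : seq nat) (y : nat) : form :=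
  match n with
  | 0 => FD xs y
  | n'.+1 =>
    let N := (foldr maxn y xs).+1 in
    let a := N in let b := N.+1 in let c := N.+2 in
    let dd := N.+3 in let w := N.+4 in
    FAll a (FAll b (FAll c
      (FAnd
        (FImp (FEx dd (FAnd (FC xs dd) (FLe dd a)))
              (phi n' (rcons xs a) y))
        (FAnd
          (FImp (FAnd (FAnd (FC xs a) (FC xs b)) (FM a b c w))
                (phi n' (rcons xs c) y))
          (FImp (FAnd (FC xs c) (FJ a b c w))
                (FOr (phi n' (rcons xs a) y) (phi n' (rcons xs b) y)))))))
  end.

Definition is_meet {d : Order.disp_t} {P : porderType d} (a b c : P) : Prop :=
  c <= a /\ c <= b /\ forall w : P, w <= a -> w <= b -> w <= c.

Definition is_join {d : Order.disp_t} {P : porderType d} (a b c : P) : Prop :=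
  a <= c /\ b <= c /\ forall w : P, a <= w -> b <= w -> c <= w.

(* Moves of player forall.  MMeet a b c : play (a,b) where c = a /\ b;
   MJoin a b c : play (a,b) where c = a \/ b. *)
Inductive move (T : Type) : Type :=
  | MUp : T -> move T
  | MMeet : T -> T -> T -> move T
  | MJoin : T -> T -> T -> move T.

Definition legal {d : Order.disp_t} {P : porderType d}
  (U : P -> Prop) (mv : move P) : Prop :=
  match mv with
  | MUp b => exists2 a, U a & a <= b
  | MMeet a b c => [/\ U a, U b & is_meet a b c]
  | MJoin a b c => is_join a b c /\ U c
  end.

Definition addp {T : Type} (U : T -> Prop) (x : T) : T -> Prop :=
  fun z => U z \/ z = x.

Definition step {T : Type} (U : T -> Prop) (mv : move T) (ch : bool)
  : T -> Prop :=
  match mv with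
  | MUp b => addp U b
  | MMeet _ _ c => addp U c
  | MJoin a b _ => addp U (if ch then a else b)
  end.

(* A strategy for exists: given the history of forall's previous moves and
   his current move, the choice to make. *)
Definition strategy (T : Type) := seq (move T) -> move T -> bool.

Definition disjointp {T : Type} (U V : T -> Prop) : Prop :=
  forall z, ~ (U z /\ V z).

(* safe V s hist U ms : playing the forall-moves ms (as long as they are
   legal) against strategy s from position U (history hist), the set U is
   disjoint from V at the beginning of every round reached. *)
Fixpoint safe {d : Order.disp_t} {P : porderType d} (V : P -> Prop)
  (s : strategy P) (hist : seq (move P)) (U : P -> Prop) (ms : seq (move P))
  : Prop :=
  disjointp U V /\
  match ms with
  | [::] => True
  | mv :: ms' => legal U mv ->
      safe V s (rcons hist mv) (step U mv (s hist mv)) ms'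
  end.

Definition n_strategy {d : Order.disp_t} {P : porderType d}
  (n : nat) (U0 V : P -> Prop) (s : strategy P) : Prop :=
  forall ms : seq (move P), size ms <= n -> safe V s [::] U0 ms.

Definition has_n_strategy {d : Order.disp_t} {P : porderType d}
  (n : nat) (U0 V : P -> Prop) : Prop :=
  exists s : strategy P, n_strategy n U0 V s.

From mathcomp Require Import all_boot all_order zify.
From Stdlib Require Import Classical IndefiniteDescription.
Set Implicit Arguments. Unset Strict Implicit. Unset Printing Implicit Defensive.
Import Order.Theory.
Local Open Scope order_scope.

(** Both sides unfold in lockstep along [n]. ∃ has an (n+1)-strategy from [U]
    iff [U] misses [V] and every legal move of ∀ has an answer after which she
    has an n-strategy; the three conjuncts of φ_{m(n+1)} are exactly the three
    kinds of moves, the fresh variables [a], [b], [c] naming the elements ∀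
    plays and the new last entry of the variable list naming the element ∃
    adds.  The disjointness [D_m] needs no clause of its own: it follows from
    the up-move answered by an element already in [U]. *)

Section Game.
Variables (d : Order.disp_t) (P : porderType d).
Implicit Types (U V : P -> Prop) (s : strategy P) (h ms : seq (move P)).

Lemma safe_prefix V s h0 h U ms :
  safe V s (h0 ++ h) U ms <-> safe V (fun h' => s (h0 ++ h')) h U ms.
Proof.
elim: ms h U => [|mv ms IH] h U //=; rewrite rcons_cat.
by split=> -[UV safe_mv]; split=> // /safe_mv /IH.
Qed.

Lemma step_ext U U' mv ch : (forall z, U z <-> U' z) ->
  forall z, step U mv ch z <-> step U' mv ch z.
Proof. by move=> UU' z; case: mv => * /=; rewrite /addp UU'. Qed.

Lemma legal_ext U U' mv : (forall z, U z <-> U' z) -> legal U' mv -> legal U mv.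
Proof.
move=> UU'; case: mv => [b|a b c|a b c] /=.
- by case=> a /UU' Ua ab; exists a.
- by case=> /UU' Ua /UU' Ub abc.
- by case=> abc /UU'.
Qed.

Lemma safe_ext V s h U U' ms : (forall z, U z <-> U' z) ->
  safe V s h U ms -> safe V s h U' ms.
Proof.
elim: ms h U U' => [|mv ms IH] h U U' UU' [UV safe_mv] /=.
  by split=> // z [/UU' Uz Vz]; apply: (UV z).
split=> [z [/UU' Uz Vz]|/(legal_ext UU') /safe_mv]; first exact: (UV z).
by apply: IH; apply: step_ext.
Qed.

Lemma has_n_strategy_ext n U U' V : (forall z, U z <-> U' z) ->
  has_n_strategy n U V <-> has_n_strategy n U' V.
Proof.
move=> UU'; split=> -[s win]; exists s => ms /win; apply: safe_ext => // z.
by rewrite UU'.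
Qed.

Lemma has_n_strategy_disjoint n U V : has_n_strategy n U V -> disjointp U V.
Proof. by case=> s /(_ [::] isT) []. Qed.

Lemma has_n_strategy0 U V : has_n_strategy 0 U V <-> disjointp U V.
Proof.
split=> [|UV]; first exact: has_n_strategy_disjoint.
by exists (fun _ _ => true) => -[].
Qed.

Lemma has_n_strategyS n U V : has_n_strategy n.+1 U V <->
  disjointp U V /\
  forall mv, legal U mv -> exists ch, has_n_strategy n (step U mv ch) V.
Proof.
split=> [[s win]|[UV answer]].
  split=> [|mv legal_mv]; first by case: (win [::]).
  exists (s [::] mv), (fun h => s (mv :: h)) => ms size_ms.
  by have [_ /(_ legal_mv) /(safe_prefix _ _ [:: mv] [::])] := win (mv :: ms) size_ms.
have [f f_wins] : exists f : move P -> bool * strategy P, forall mv,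
    legal U mv -> n_strategy n (step U mv (f mv).1) V (f mv).2.
  apply: (functional_choice (fun mv (cs : bool * strategy P) =>
    legal U mv -> n_strategy n (step U mv cs.1) V cs.2)) => mv.
  have [/answer [ch [s win]]|illegal] := classic (legal U mv).
    by exists (ch, s).
  by exists (true, fun _ _ => true).
exists (fun h mv => if h is mv0 :: h' then (f mv0).2 h' mv else (f mv).1).
move=> [|mv ms] // size_ms; split=> // legal_mv.
exact/(safe_prefix _ _ [:: mv] [::])/f_wins.
Qed.

Definition answerable U (Q : (P -> Prop) -> Prop) : Prop :=
  forall a b c : P,
  [/\ (exists2 e, U e & e <= a) -> Q (addp U a),
      [/\ U a, U b & is_meet a b c] -> Q (addp U c) &
      is_join a b c /\ U c -> Q (addp U a) \/ Q (addp U b)].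

Lemma answerableP U Q :
  answerable U Q <-> forall mv, legal U mv -> exists ch, Q (step U mv ch).
Proof.
split=> [answer [b|a b c|a b c] /= legal_mv|answer a b c].
- by exists true; have [up _ _] := answer b b b; apply: up.
- by exists true; have [_ meet _] := answer a b c; apply: meet.
- have [_ _ /(_ legal_mv) [Qa|Qb]] := answer a b c.
    by exists true.
  by exists false.
split=> [[e Ue ea]|[Ua Ub abc]|[abc Uc]].
- by have [ch] := answer (MUp a) (ex_intro2 _ _ e Ue ea).
- by have [ch] := answer (MMeet a b c) (And3 Ua Ub abc).
- by have [[] Q_ch] := answer (MJoin a b c) (conj abc Uc); [left|right].
Qed.

Lemma has_n_strategyS_answerable n U V :
  has_n_strategy n.+1 U V <-> answerable U (has_n_strategy n ^~ V).
Proof.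
rewrite has_n_strategyS answerableP; split=> [[] //|answer]; split=> // z [Uz Vz].
have [ch /has_n_strategy_disjoint UV] := answer (MUp z) (ex_intro2 _ _ z Uz (lexx z)).
by apply: (UV z); split=> //; right.
Qed.

End Game.

Section Semantics.
Variables (d : Order.disp_t) (P : porderType d).
Implicit Types (v w : nat -> P) (xs : seq nat).

Lemma upd_same v x a : upd v x a x = a.
Proof. by rewrite /upd eqxx. Qed.

Lemma upd_lt v x a z : (z < x)%N -> upd v x a z = v z.
Proof. by move=> zx; rewrite /upd ltn_eqF. Qed.

Lemma upd3_values v x a b c : let w := upd (upd (upd v x a) x.+1 b) x.+2 c in
  [/\ w x = a, w x.+1 = b & w x.+2 = c].
Proof. by split; rewrite /upd; do ! case: eqP => //; lia. Qed.

Definition vals v xs : P -> Prop := fun p => exists2 x, x \in xs & p = v x.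

Lemma vals_eq_in v w xs : {in xs, w =1 v} -> forall p, vals w xs p <-> vals v xs p.
Proof. by move=> wv p; split=> -[x xs_x ->]; exists x; rewrite ?wv. Qed.

Lemma vals_rcons v xs x p : vals v (rcons xs x) p <-> addp (vals v xs) (v x) p.
Proof.
rewrite /vals /addp; split=> [[z]|[[z xs_z ->]|->]].
- by rewrite mem_rcons inE => /predU1P [->|xs_z ->]; [right|left; exists z].
- by exists z; rewrite // mem_rcons inE xs_z orbT.
- by exists x; rewrite // mem_rcons mem_head.
Qed.

Lemma sat_FC v xs z : sat v (FC xs z) <-> vals v xs (v z).
Proof.
elim: xs => [|x [|x' xs] IH]; first by split=> // -[].
  by split=> [->|[x']]; [exists x; rewrite ?mem_head | rewrite inE => /eqP ->].
rewrite [sat _ _]/= IH /vals; split=> [[->|[x'' xs_x'' ->]]|[x'' xs_x'' ->]].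
- by exists x; rewrite ?mem_head.
- by exists x''; rewrite // inE xs_x'' orbT.
- by move: xs_x''; rewrite inE => /predU1P [->|]; [left|right; exists x''].
Qed.

Lemma sat_FM v x y z t : (x < t)%N -> (y < t)%N -> (z < t)%N ->
  sat v (FM x y z t) <-> is_meet (v x) (v y) (v z).
Proof.
move=> xt yt zt; rewrite /FM /= /is_meet.
split=> -[zx [zy glb]]; split=> //; split=> // e; rewrite ?upd_same ?upd_lt //.
- by move=> ex ey; move: (glb e); rewrite upd_same !upd_lt //; apply.
- by case; apply: glb.
Qed.

Lemma sat_FJ v x y z t : (x < t)%N -> (y < t)%N -> (z < t)%N ->
  sat v (FJ x y z t) <-> is_join (v x) (v y) (v z).
Proof.
move=> xt yt zt; rewrite /FJ /= /is_join.
split=> -[xz [yz lub]]; split=> //; split=> // e; rewrite ?upd_same ?upd_lt //.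
- by move=> xe ye; move: (lub e); rewrite upd_same !upd_lt //; apply.
- by case; apply: lub.
Qed.

Lemma foldr_maxn_ub y xs :
  (y <= foldr maxn y xs)%N /\ {in xs, forall x, x <= foldr maxn y xs}%N.
Proof.
elim: xs => [|x xs [ub_y ub_xs]] //=; split; first by rewrite leq_max ub_y orbT.
by move=> z /predU1P [->|/ub_xs]; rewrite leq_max ?leqnn // => ->; rewrite orbT.
Qed.

Lemma sat_phi0 v xs y :
  sat v (phi 0 xs y) <-> has_n_strategy 0 (vals v xs) (eq^~ (v y)).
Proof.
rewrite has_n_strategy0 /= sat_FC.
split=> [not_y p [xs_p py]|UV xs_y]; last exact: (UV (v y)).
by apply: not_y; rewrite -py.
Qed.

Section Step.
Variables (n : nat) (v : nat -> P) (xs : seq nat) (y : nat).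
Hypothesis IH : forall xs y v,
  sat v (phi n xs y) <-> has_n_strategy n (vals v xs) (eq^~ (v y)).

Let N := (foldr maxn y xs).+1.
Let agrees w := forall z, (z < N)%N -> w z = v z.

Lemma agrees_upd w x a : agrees w -> (N <= x)%N -> agrees (upd w x a).
Proof. by move=> wv Nx z zN; rewrite upd_lt ?wv // (leq_trans zN Nx). Qed.

Lemma vals_agrees w : agrees w -> forall p, vals w xs p <-> vals v xs p.
Proof.
move=> wv; apply: vals_eq_in => x /(foldr_maxn_ub y xs).2 xy; apply: wv.
by rewrite ltnS.
Qed.

Lemma sat_FC_agrees w z : agrees w -> sat w (FC xs z) <-> vals v xs (w z).
Proof. by move=> wv; rewrite sat_FC vals_agrees. Qed.

Lemma sat_phi_rcons_agrees w z : agrees w ->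
  sat w (phi n (rcons xs z) y) <->
  has_n_strategy n (addp (vals v xs) (w z)) (eq^~ (v y)).
Proof.
move=> wv; rewrite IH wv ?ltnS ?(foldr_maxn_ub y xs).1 //.
by apply: has_n_strategy_ext => p; rewrite vals_rcons /addp vals_agrees.
Qed.

Lemma sat_up_agrees w : agrees w ->
  (exists e, sat (upd w N.+3 e) (FC xs N.+3) /\ upd w N.+3 e N.+3 <= upd w N.+3 e N)
  <-> exists2 e, vals v xs e & e <= w N.
Proof.
move=> wv; have we e : agrees (upd w N.+3 e) by apply: agrees_upd wv _; lia.
split=> [[e []]|[e xs_e eN]].
  by rewrite sat_FC_agrees // upd_same upd_lt; [exists e | lia].
by exists e; rewrite sat_FC_agrees // upd_same upd_lt; last lia.
Qed.

Lemma sat_phiS :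
  sat v (phi n.+1 xs y) <->
  answerable (vals v xs) (has_n_strategy n ^~ (eq^~ (v y))).
Proof.
cbn [phi sat]; rewrite -/N /answerable.
have agrees_abc a b c : agrees (upd (upd (upd v N a) N.+1 b) N.+2 c).
  by do 3 (apply: agrees_upd; last lia).
split=> win a b c; move: {win}(win a b c).
all: rewrite sat_up_agrees // !sat_phi_rcons_agrees // !sat_FC_agrees //.
all: rewrite sat_FM ?sat_FJ; try lia.
all: case: (upd3_values v N a b c) => -> -> ->.
- case=> up [meet join]; split=> // [[Ua Ub abc]|[abc Uc]].
    exact: meet.
  exact: join.
- case=> up meet join; split=> //; split=> [[[Ua Ub] abc]|[Uc abc]].
    exact: meet.
  exact: join.
Qed.
End Step.
End Semantics.

Theorem lemma4p1 (d : Order.disp_t) (P : porderType d) (v : nat -> P)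
  (m n : nat) (xs : seq nat) (y : nat) :
  size xs = m ->
  (sat v (phi n xs y) <->
   has_n_strategy n (fun p : P => exists2 x, x \in xs & p = v x)
                    (fun p : P => p = v y)).
Proof.
(* [phi] is indexed by the variable list itself. *)
move=> _; elim: n xs y v => [|n IH] xs y v; first exact: sat_phi0.
by rewrite has_n_strategyS_answerable; apply: sat_phiS.
Qed.
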